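(* Let $\alpha_1\in(0,1)$, $\rho_1,\rho_2>0$, $u_1,u_2$ be smooth functions of $(t,x)$, and let $\zeta_1,\dots,\zeta_5$ be given functions. Set \[ u_I=u,\qquad p_I=\frac{\alpha_2\rho_2p_1+\alpha_1\rho_1p_2}{\rho}. \] Then $(\alpha_1,\rho_1,\rho_2,u_1,u_2)$ solves the barotropic Baer–Nunziato system \begin{align*} &\partial_t\alpha_1+u_I\partial_x\alpha_1=\zeta_1,\quad \partial_t(\alpha_1\rho_1)+\partial_x(\alpha_1\rho_1u_1)=\zeta_2,\quad \partial_t(\alpha_2\rho_2)+\partial_x(\alpha_2\rho_2u_2)=\zeta_3,\\ &\partial_t(\alpha_1\rho_1u_1)+\partial_x(\alpha_1\rho_1u_1^2+\alpha_1p_1)-p_I\partial_x\alpha_1=\zeta_4,\quad \partial_t(\alpha_2\rho_2u_2)+\partial_x(\alpha_2\rho_2u_2^2+\alpha_2p_2)-p_I\partial_x\alpha_2=\zeta_5 \end{align*} if and only if it solves the conservative SHTC system \begin{align*} &\partial_t(\alpha_1\rho)+\partial_x(\alpha_1\rho u)=\xi_1,\quad \partial_t(\alpha_1\rho_1)+\partial_x(\alpha_1\rho_1u_1)=\xi_2,\quad \partial_t\rho+\partial_x(\rho u)=\xi_3,\\ &\partial_t(\alpha_1\rho_1u_1+\alpha_2\rho_2u_2)+\partial_x(\alpha_1\rho_1u_1^2+\alpha_2\rho_2u_2^2+\alpha_1p_1+\alpha_2p_2)=\xi_4,\\ &\partial_t(u_1-u_2)+\partial_x\Big(\tfrac12u_1^2-\tfrac12u_2^2+\Psi_1(\rho_1)-\Psi_2(\rho_2)\Big)=\xi_5,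 \end{align*} with $\xi=B\zeta$, where \[ B=\begin{pmatrix} \rho & \alpha_1 & \alpha_1 & 0 & 0\\ 0 & 1 & 0 & 0 & 0\\ 0 & 1 & 1 & 0 & 0\\ 0 & 0 & 0 & 1 & 1\\ 0 & -\frac{u_1}{\alpha_1\rho_1} & \frac{u_2}{\alpha_2\rho_2} & \frac{1}{\alpha_1\rho_1} & -\frac{1}{\alpha_2\rho_2} \end{pmatrix}. \] Moreover $B$ is invertible with inverse \[ C=\begin{pmatrix} \frac1\rho & 0 & -\frac{\alpha_1}{\rho} & 0 & 0\\ 0 & 1 & 0 & 0 & 0\\ 0 & -1 & 1 & 0 & 0\\ 0 & c_2u_1+c_1u_2 & -c_1u_2 & c_1 & c_1c_2\rho\\ 0 & -(c_2u_1+c_1u_2) & c_1u_2 & c_2 & -c_1c_2\rho \end{pmatrix}, \] so equivalently $\zeta=C\xi$.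
   Context: For $i=1,2$, $p_i:(0,\infty)\to\mathbb{R}$ is smooth with $p_i'>0$; $\varphi_i$ is an antiderivative of $\rho\mapsto p_i(\rho)/\rho^2$ and $\Psi_i(\rho)=\varphi_i(\rho)+p_i(\rho)/\rho$ (so $\Psi_i'=p_i'/\rho$). Notation: $\alpha_2=1-\alpha_1$, $\rho=\alpha_1\rho_1+\alpha_2\rho_2$, $c_i=\alpha_i\rho_i/\rho$, $u=c_1u_1+c_2u_2$, $p_i=p_i(\rho_i)$. *)

From Stdlib Require Import Reals.
From Coquelicot Require Import Coquelicot.
From mathcomp Require Import all_boot all_algebra.
From mathcomp Require Import Rstruct.

Set Implicit Arguments.
Unset Strict Implicit.
Unset Printing Implicit Defensive.

Local Open Scope R_scope.

Definition field := R -> R -> R.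

Definition dt (f : field) : field := fun t x => Derive (fun s => f s x) t.
Definition dx (f : field) : field := fun t x => Derive (fun y => f t y) x.

Fixpoint iter_partial (ds : list bool) (f : field) : field :=
  match ds with
  | nil => f
  | cons d ds' => if d then dt (iter_partial ds' f) else dx (iter_partial ds' f)
  end.

Definition smooth2 (f : field) : Prop :=
  forall (ds : list bool) (t x : R),
    ex_derive (fun s => iter_partial ds f s x) t /\
    ex_derive (fun y => iter_partial ds f t y) x.

Definition pressure_law (p : R -> R) : Prop :=
  (forall n r, 0 < r -> ex_derive_n p n r) /\
  (forall r, 0 < r -> 0 < Derive p r).

Definition antider_p (p phi : R -> R) : Prop :=
  forall r, 0 < r -> is_derive phi r (p r / r ^ 2).

Definition Psi (p phi : R -> R) (r : R) : R := phi r + p r / r.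

Definition mx_of_rows (rows : list (list R)) : 'M[R]_5 :=
  \matrix_(i < 5, j < 5) List.nth j (List.nth i rows nil) 0.

Definition Bmat (a1 r1 r2 v1 v2 : R) : 'M[R]_5 :=
  let a2 := 1 - a1 in
  let rho := a1 * r1 + a2 * r2 in
  mx_of_rows
   [:: [:: rho; a1; a1; 0; 0];
       [:: 0; 1; 0; 0; 0];
       [:: 0; 1; 1; 0; 0];
       [:: 0; 0; 0; 1; 1];
       [:: 0; - (v1 / (a1 * r1)); v2 / (a2 * r2); 1 / (a1 * r1); - (1 / (a2 * r2))]].

Definition Cmat (a1 r1 r2 v1 v2 : R) : 'M[R]_5 :=
  let a2 := 1 - a1 in
  let rho := a1 * r1 + a2 * r2 in
  let c1 := a1 * r1 / rho in
  let c2 := a2 * r2 / rho in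
  mx_of_rows
   [:: [:: 1 / rho; 0; - (a1 / rho); 0; 0];
       [:: 0; 1; 0; 0; 0];
       [:: 0; -1; 1; 0; 0];
       [:: 0; c2 * v1 + c1 * v2; - (c1 * v2); c1; c1 * c2 * rho];
       [:: 0; - (c2 * v1 + c1 * v2); c1 * v2; c2; - (c1 * c2 * rho)]].

Definition col5 (z1 z2 z3 z4 z5 : R) : 'cV[R]_5 :=
  \col_(i < 5) List.nth i [:: z1; z2; z3; z4; z5] 0.

(* components are numbered 0..4 (paper's xi_1..xi_5) *)
Definition xi_comp (a1 r1 r2 u1 u2 z1 z2 z3 z4 z5 : field) (i : nat) : field :=
  fun t x =>
    ((Bmat (a1 t x) (r1 t x) (r2 t x) (u1 t x) (u2 t x)
      *m col5 (z1 t x) (z2 t x) (z3 t x) (z4 t x) (z5 t x))%R) (inord i) ord0.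

From Stdlib Require Import Reals Lra.
From Coquelicot Require Import Coquelicot.
From mathcomp Require Import all_boot all_algebra.
From mathcomp Require Import Rstruct.
Import GRing.Theory.

Local Open Scope R_scope.

(* The left-hand sides of the two systems are linked by an identity valid for
   all smooth fields, not only for solutions: by the chain rule,
   SHTC = B * BN pointwise.  In the total momentum row the p_I terms cancel
   since d alpha_2 = - d alpha_1.  In the relative velocity row, after dividing
   the phase momentum equations by alpha_i rho_i, the choice of p_I makes the
   d_x alpha_1 terms of both phases equal to (p_1 - p_2) d_x alpha_1 / rho,
   and d_x p_i / rho_i = d_x Psi_i(rho_i).  As C B = 1, BN = zeta is then
   equivalent to SHTC = B zeta. *)

(* auto_derive writes the derivative of an opaque function [p] as
   [Derive (fun s => p s)], which [field] would not identify with [Derive p]. *)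
Ltac eta_reduce_Derive :=
  repeat match goal with
  | |- context [Derive (fun s => ?g s) ?y] =>
      change (Derive (fun s => g s) y) with (Derive g y)
  end.

(* Expands every [Derive] by the chain rule down to the partial maps
   [s |-> f s x] and [y |-> f t y] of the fields. *)
Ltac expand_Derive :=
  repeat match goal with
  | |- context [Derive ?f ?y] =>
      lazymatch f with
      | fun s => ?g s ?z => fail
      | fun s => ?g ?z s => fail
      | fun s => ?g s => fail
      | fun _ => _ =>
          let E := fresh in
          eassert (E : Derive f y = _) by
            (apply: is_derive_unique; auto_derive; [repeat split; auto | reflexivity]);
          rewrite E; clear E
      end
  end;
  eta_reduce_Derive.

Lemma is_derive_Psi {p phi : R -> R} {r : R} :
  antider_p p phi -> 0 < r -> ex_derive p r ->
  is_derive (Psi p phi) r (Derive p r / r).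
Proof.
move=> dphi r_gt0 dp; have Dphi := is_derive_unique _ _ _ (dphi r r_gt0).
rewrite /Psi; auto_derive.
- by split; [exists (p r / r ^ 2); apply: dphi | split => //; lra].
- by eta_reduce_Derive; rewrite Dphi; field; lra.
Qed.

Lemma Derive_Psi {p phi : R -> R} {r : R} :
  antider_p p phi -> 0 < r -> ex_derive p r ->
  Derive (Psi p phi) r = Derive p r / r.
Proof. by move=> dphi r_gt0 dp; apply/is_derive_unique/is_derive_Psi. Qed.

Lemma pressure_law_ex_derive {p : R -> R} :
  pressure_law p -> forall r, 0 < r -> ex_derive p r.
Proof. by move=> [Dp _] r; exact: (Dp 1%nat). Qed.

Definition partially_derivable (f : field) : Prop :=
  forall t x, ex_derive (fun s => f s x) t /\ ex_derive (fun y => f t y) x.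

Lemma smooth2_partially_derivable {f : field} :
  smooth2 f -> partially_derivable f.
Proof. by move=> Sf; exact: (Sf nil). Qed.

Lemma col5_eq_iff (v : 'cV[R]_5) (s0 s1 s2 s3 s4 : R) :
  col5 s0 s1 s2 s3 s4 = v <->
  s0 = v (inord 0) ord0 /\ s1 = v (inord 1) ord0 /\ s2 = v (inord 2) ord0 /\
  s3 = v (inord 3) ord0 /\ s4 = v (inord 4) ord0.
Proof.
split=> [<-|[e0 [e1 [e2 [e3 e4]]]]]; first by rewrite !mxE !inordK.
apply/colP => -[i lt_i5] /[1!mxE] /=.
have Ei : Ordinal lt_i5 = inord i by apply/val_inj; rewrite /= inordK.
by rewrite Ei; case: i lt_i5 Ei => [|[|[|[|[|i]]]]].
Qed.

Lemma eq_col5 (s0 s1 s2 s3 s4 z0 z1 z2 z3 z4 : R) :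
  col5 s0 s1 s2 s3 s4 = col5 z0 z1 z2 z3 z4 <->
  s0 = z0 /\ s1 = z1 /\ s2 = z2 /\ s3 = z3 /\ s4 = z4.
Proof. by rewrite col5_eq_iff !mxE !inordK. Qed.

Lemma Bmat_mul_col5 (a r1 r2 v1 v2 z0 z1 z2 z3 z4 : R) :
  (Bmat a r1 r2 v1 v2 *m col5 z0 z1 z2 z3 z4)%R =
  col5 ((a * r1 + (1 - a) * r2) * z0 + a * z1 + a * z2) z1 (z1 + z2) (z3 + z4)
       ((z3 - v1 * z1) / (a * r1) - (z4 - v2 * z2) / ((1 - a) * r2)).
Proof.
apply/colP => -[[|[|[|[|[|i]]]]] lt_i5] //;
rewrite !mxE !big_ord_recl big_ord0 !mxE /=;
rewrite -?RplusE -?RmultE -?RoppE /= -?R0E; rewrite /Rdiv; ring.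
Qed.

Lemma mulmx_Bmat_Cmat (a r1 r2 v1 v2 : R) :
  0 < a < 1 -> 0 < r1 -> 0 < r2 ->
  (Bmat a r1 r2 v1 v2 *m Cmat a r1 r2 v1 v2 = 1)%R.
Proof.
move=> a_bounds r1_gt0 r2_gt0.
have a_neq0 : a <> 0 by lra.
have a2_neq0 : 1 - a <> 0 by lra.
have r1_neq0 : r1 <> 0 by lra.
have r2_neq0 : r2 <> 0 by lra.
have rho_neq0 : a * r1 + (1 - a) * r2 <> 0 by nra.
apply/matrixP => -[[|[|[|[|[|i]]]]] lt_i5] // -[[|[|[|[|[|j]]]]] lt_j5] //;
rewrite !mxE !big_ord_recl big_ord0 !mxE /= -?RplusE -?RmultE -?RoppE /=
  ?mulr1n ?mulr0n -?R0E -?R1E; by field; repeat split.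
Qed.

Lemma mulmx_Cmat_Bmat (a r1 r2 v1 v2 : R) :
  0 < a < 1 -> 0 < r1 -> 0 < r2 ->
  (Cmat a r1 r2 v1 v2 *m Bmat a r1 r2 v1 v2 = 1)%R.
Proof. by move=> *; apply: mulmx1C; apply: mulmx_Bmat_Cmat. Qed.

Lemma mulmx_Bmat_inj (a r1 r2 v1 v2 : R) (w z : 'cV[R]_5) :
  0 < a < 1 -> 0 < r1 -> 0 < r2 ->
  (Bmat a r1 r2 v1 v2 *m w = Bmat a r1 r2 v1 v2 *m z)%R -> w = z.
Proof.
move=> a_bounds r1_gt0 r2_gt0 E.
have CB : (Cmat a r1 r2 v1 v2 *m Bmat a r1 r2 v1 v2 = 1%:M)%R by exact: mulmx_Cmat_Bmat.
by rewrite -[w]mul1mx -[z]mul1mx -CB -!mulmxA E.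
Qed.

Section BaerNunziatoSHTC.

Context {p1 p2 phi1 phi2 : R -> R} {a1 r1 r2 u1 u2 : field}.

Let a2 : field := fun t x => 1 - a1 t x.
Let rho : field := fun t x => a1 t x * r1 t x + a2 t x * r2 t x.
Let c1 : field := fun t x => a1 t x * r1 t x / rho t x.
Let c2 : field := fun t x => a2 t x * r2 t x / rho t x.
Let u : field := fun t x => c1 t x * u1 t x + c2 t x * u2 t x.
Let P1 : field := fun t x => p1 (r1 t x).
Let P2 : field := fun t x => p2 (r2 t x).
Let pI : field := fun t x =>
  (a2 t x * r2 t x * P1 t x + a1 t x * r1 t x * P2 t x) / rho t x.

Definition bn_lhs (t x : R) : 'cV[R]_5 :=
  col5
    (dt a1 t x + u t x * dx a1 t x)
    (dt (fun t x => a1 t x * r1 t x) t x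
       + dx (fun t x => a1 t x * r1 t x * u1 t x) t x)
    (dt (fun t x => a2 t x * r2 t x) t x
       + dx (fun t x => a2 t x * r2 t x * u2 t x) t x)
    (dt (fun t x => a1 t x * r1 t x * u1 t x) t x
       + dx (fun t x => a1 t x * r1 t x * u1 t x ^ 2 + a1 t x * P1 t x) t x
       - pI t x * dx a1 t x)
    (dt (fun t x => a2 t x * r2 t x * u2 t x) t x
       + dx (fun t x => a2 t x * r2 t x * u2 t x ^ 2 + a2 t x * P2 t x) t x
       - pI t x * dx a2 t x).

Definition shtc_lhs (t x : R) : 'cV[R]_5 :=
  col5
    (dt (fun t x => a1 t x * rho t x) t x
       + dx (fun t x => a1 t x * rho t x * u t x) t x)
    (dt (fun t x => a1 t x * r1 t x) t x
       + dx (fun t x => a1 t x * r1 t x * u1 t x) t x)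
    (dt rho t x + dx (fun t x => rho t x * u t x) t x)
    (dt (fun t x => a1 t x * r1 t x * u1 t x + a2 t x * r2 t x * u2 t x) t x
       + dx (fun t x => a1 t x * r1 t x * u1 t x ^ 2 + a2 t x * r2 t x * u2 t x ^ 2
                        + a1 t x * P1 t x + a2 t x * P2 t x) t x)
    (dt (fun t x => u1 t x - u2 t x) t x
       + dx (fun t x => / 2 * u1 t x ^ 2 - / 2 * u2 t x ^ 2
                        + Psi p1 phi1 (r1 t x) - Psi p2 phi2 (r2 t x)) t x).

Hypotheses (Hphi1 : antider_p p1 phi1) (Hphi2 : antider_p p2 phi2).
Hypotheses (Dp1 : forall r, 0 < r -> ex_derive p1 r)
           (Dp2 : forall r, 0 < r -> ex_derive p2 r).
Hypotheses (Ha1 : forall t x, 0 < a1 t x < 1)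
           (Hr1 : forall t x, 0 < r1 t x) (Hr2 : forall t x, 0 < r2 t x).
Hypotheses (Da1 : partially_derivable a1) (Dr1 : partially_derivable r1)
           (Dr2 : partially_derivable r2) (Du1 : partially_derivable u1)
           (Du2 : partially_derivable u2).

Lemma shtc_lhs_Bmat (t x : R) :
  shtc_lhs t x = (Bmat (a1 t x) (r1 t x) (r2 t x) (u1 t x) (u2 t x) *m bn_lhs t x)%R.
Proof.
have [a1_gt0 a1_lt1] := Ha1 t x; have r1_gt0 := Hr1 t x; have r2_gt0 := Hr2 t x.
have a1_neq0 : a1 t x <> 0 by lra.
have a2_neq0 : 1 - a1 t x <> 0 by lra.
have r1_neq0 : r1 t x <> 0 by lra.
have r2_neq0 : r2 t x <> 0 by lra.
have rho_neq0 : a1 t x * r1 t x + (1 - a1 t x) * r2 t x <> 0 by nra.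
have [? ?] := Da1 t x; have [? ?] := Dr1 t x; have [? ?] := Dr2 t x.
have [? ?] := Du1 t x; have [? ?] := Du2 t x.
have dp1 := Dp1 _ r1_gt0; have dp2 := Dp2 _ r2_gt0.
have dPsi1 : ex_derive (Psi p1 phi1) (r1 t x) by eexists; apply: is_derive_Psi.
have dPsi2 : ex_derive (Psi p2 phi2) (r2 t x) by eexists; apply: is_derive_Psi.
rewrite /shtc_lhs /bn_lhs Bmat_mul_col5; congr col5;
  rewrite /dt /dx /pI /P1 /P2 /u /c1 /c2 /rho /a2; cbv beta; expand_Derive;
  rewrite ?(Derive_Psi Hphi1) ?(Derive_Psi Hphi2) //; by field; repeat split.
Qed.

Lemma bn_iff_shtc (z1 z2 z3 z4 z5 : field) :
  (forall t x, bn_lhs t x = col5 (z1 t x) (z2 t x) (z3 t x) (z4 t x) (z5 t x)) <->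
  (forall t x, shtc_lhs t x =
     (Bmat (a1 t x) (r1 t x) (r2 t x) (u1 t x) (u2 t x)
        *m col5 (z1 t x) (z2 t x) (z3 t x) (z4 t x) (z5 t x))%R).
Proof.
split=> E t x; first by rewrite shtc_lhs_Bmat E.
apply: (mulmx_Bmat_inj _ _ _ (u1 t x) (u2 t x) _ _ (Ha1 t x) (Hr1 t x) (Hr2 t x)).
by rewrite -shtc_lhs_Bmat E.
Qed.

End BaerNunziatoSHTC.

Theorem mainTheorem5
  (p1 p2 phi1 phi2 : R -> R)
  (Hp1 : pressure_law p1) (Hp2 : pressure_law p2)
  (Hphi1 : antider_p p1 phi1) (Hphi2 : antider_p p2 phi2)
  (a1 r1 r2 u1 u2 : field)
  (Ha1 : forall t x, 0 < a1 t x < 1)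
  (Hr1 : forall t x, 0 < r1 t x) (Hr2 : forall t x, 0 < r2 t x)
  (Sa1 : smooth2 a1) (Sr1 : smooth2 r1) (Sr2 : smooth2 r2)
  (Su1 : smooth2 u1) (Su2 : smooth2 u2)
  (z1 z2 z3 z4 z5 : field) :
  let a2 : field := fun t x => 1 - a1 t x in
  let rho : field := fun t x => a1 t x * r1 t x + a2 t x * r2 t x in
  let c1 : field := fun t x => a1 t x * r1 t x / rho t x in
  let c2 : field := fun t x => a2 t x * r2 t x / rho t x in
  let u : field := fun t x => c1 t x * u1 t x + c2 t x * u2 t x in
  let P1 : field := fun t x => p1 (r1 t x) in
  let P2 : field := fun t x => p2 (r2 t x) in
  let uI : field := u in
  let pI : field := fun t x =>
    (a2 t x * r2 t x * P1 t x + a1 t x * r1 t x * P2 t x) / rho t x in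
  let xi := xi_comp a1 r1 r2 u1 u2 z1 z2 z3 z4 z5 in
  ((forall t x,
      dt a1 t x + uI t x * dx a1 t x = z1 t x /\
      dt (fun t x => a1 t x * r1 t x) t x
        + dx (fun t x => a1 t x * r1 t x * u1 t x) t x = z2 t x /\
      dt (fun t x => a2 t x * r2 t x) t x
        + dx (fun t x => a2 t x * r2 t x * u2 t x) t x = z3 t x /\
      dt (fun t x => a1 t x * r1 t x * u1 t x) t x
        + dx (fun t x => a1 t x * r1 t x * u1 t x ^ 2 + a1 t x * P1 t x) t x
        - pI t x * dx a1 t x = z4 t x /\
      dt (fun t x => a2 t x * r2 t x * u2 t x) t x
        + dx (fun t x => a2 t x * r2 t x * u2 t x ^ 2 + a2 t x * P2 t x) t x
        - pI t x * dx a2 t x = z5 t x)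
   <->
   (forall t x,
      dt (fun t x => a1 t x * rho t x) t x
        + dx (fun t x => a1 t x * rho t x * u t x) t x = xi 0%nat t x /\
      dt (fun t x => a1 t x * r1 t x) t x
        + dx (fun t x => a1 t x * r1 t x * u1 t x) t x = xi 1%nat t x /\
      dt rho t x + dx (fun t x => rho t x * u t x) t x = xi 2%nat t x /\
      dt (fun t x => a1 t x * r1 t x * u1 t x + a2 t x * r2 t x * u2 t x) t x
        + dx (fun t x => a1 t x * r1 t x * u1 t x ^ 2 + a2 t x * r2 t x * u2 t x ^ 2
                         + a1 t x * P1 t x + a2 t x * P2 t x) t x = xi 3%nat t x /\
      dt (fun t x => u1 t x - u2 t x) t x
        + dx (fun t x => / 2 * u1 t x ^ 2 - / 2 * u2 t x ^ 2
                         + Psi p1 phi1 (r1 t x) - Psi p2 phi2 (r2 t x)) t x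
          = xi 4%nat t x))
  /\
  (forall t x,
     let B := Bmat (a1 t x) (r1 t x) (r2 t x) (u1 t x) (u2 t x) in
     let C := Cmat (a1 t x) (r1 t x) (r2 t x) (u1 t x) (u2 t x) in
     (B *m C = 1 :> 'M[R]_5)%R /\ (C *m B = 1 :> 'M[R]_5)%R).

Proof.
move=> a2 rho c1 c2 u P1 P2 uI pI xi.
split; last by move=> t x; split; [exact: mulmx_Bmat_Cmat | exact: mulmx_Cmat_Bmat].
have [to_shtc to_bn] := bn_iff_shtc Hphi1 Hphi2
  (pressure_law_ex_derive Hp1) (pressure_law_ex_derive Hp2)
  Ha1 Hr1 Hr2 (smooth2_partially_derivable Sa1) (smooth2_partially_derivable Sr1)
  (smooth2_partially_derivable Sr2) (smooth2_partially_derivable Su1)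
  (smooth2_partially_derivable Su2) z1 z2 z3 z4 z5.
rewrite /xi /xi_comp.
split=> [bn t x | shtc t x].
- by apply/col5_eq_iff/to_shtc => {}t {}x; apply/eq_col5/bn.
- by apply/eq_col5/to_bn => {}t {}x; apply/col5_eq_iff/shtc.
Qed.
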